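(* Let $(X,\preceq)$ be a partially ordered set and suppose there is a metric $d$ on $X$ such that $(X,d)$ is complete. Let $f,g,H:X\to X$ be mappings such that: (a) $f(X)\subseteq H(X)$ and $g(X)\subseteq H(X)$; (b) $f$, $g$ and $H$ are continuous; (c) the pairs $\{f,H\}$ and $\{g,H\}$ are compatible; (d) $f$ and $g$ are weakly increasing with respect to $H$. Suppose there is $\beta\in\mathcal S$ such that for every $(x,y)\in X\times X$ with $Hx$ and $Hy$ comparable, $$d(fx,gy)\le \beta\big(d(Hx,Hy)\big)\,d(Hx,Hy).$$ Then $f$, $g$ and $H$ have a coincidence point, i.e. there exists $u\in X$ with $fu=gu=Hu$.
   Context: $\mathcal S$ denotes the class of functions $\beta:[0,\infty)\to[0,1)$ such that for every sequence $(t_n)$ in $[0,\infty)$, $\beta(t_n)\to 1$ implies $t_n\to 0$. A pair $\{f,g\}$ of self-maps of a metric space $(X,d)$ is compatible if $\lim_{n\to\infty} d(fgx_n,gfx_n)=0$ whenever $(x_n)$ is a sequence in $X$ with $\lim fx_n=\lim gx_n=t$ for some $t\in X$. For $R:X\to X$ and $x\in X$, $R^{-1}(x)=\{u\in X: Ru=x\}$. Given mappings $T,S,R:X\to X$ on a partially ordered set with $T(X)\subseteq R(X)$ and $S(X)\subseteq R(X)$, $S$ and $T$ are weakly increasing with respect to $R$ if for all $x\in X$: $Tx\preceq Sy$ for all $y\in R^{-1}(Tx)$, and $Sx\preceq Ty$ for all $y\in R^{-1}(Sx)$. A coincidence point of maps $T_1,\dots,T_N$ is a point $x$ with $T_1x=\dots=T_Nx$.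 *)

From Stdlib Require Import Reals.
Open Scope R_scope.

Definition is_metric {X : Type} (d : X -> X -> R) : Prop :=
  (forall x y, 0 <= d x y) /\
  (forall x y, d x y = 0 <-> x = y) /\
  (forall x y, d x y = d y x) /\
  (forall x y z, d x z <= d x y + d y z).

Definition is_partial_order {X : Type} (le : X -> X -> Prop) : Prop :=
  (forall x, le x x) /\
  (forall x y, le x y -> le y x -> x = y) /\
  (forall x y z, le x y -> le y z -> le x z).

Definition seq_conv {X : Type} (d : X -> X -> R) (u : nat -> X) (l : X) : Prop :=
  forall eps, eps > 0 -> exists N, forall n, (n >= N)%nat -> d (u n) l < eps.

Definition seq_cauchy {X : Type} (d : X -> X -> R) (u : nat -> X) : Prop :=
  forall eps, eps > 0 -> exists N, forall m n, (m >= N)%nat -> (n >= N)%nat ->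
    d (u m) (u n) < eps.

Definition complete_metric {X : Type} (d : X -> X -> R) : Prop :=
  forall u, seq_cauchy d u -> exists l, seq_conv d u l.

Definition continuous_map {X : Type} (d : X -> X -> R) (f : X -> X) : Prop :=
  forall x eps, eps > 0 -> exists delta, delta > 0 /\
    forall y, d x y < delta -> d (f x) (f y) < eps.

(* Class S: beta : [0,oo) -> [0,1), beta(t_n) -> 1 implies t_n -> 0.
   beta is represented as a function R -> R; only its values on [0,oo) matter. *)
Definition class_S (beta : R -> R) : Prop :=
  (forall t, 0 <= t -> 0 <= beta t < 1) /\
  (forall t : nat -> R, (forall n, 0 <= t n) ->
     Un_cv (fun n => beta (t n)) 1 -> Un_cv t 0).

Definition compatible {X : Type} (d : X -> X -> R) (f g : X -> X) : Prop :=
  forall (x : nat -> X) (t : X),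
    seq_conv d (fun n => f (x n)) t -> seq_conv d (fun n => g (x n)) t ->
    Un_cv (fun n => d (f (g (x n))) (g (f (x n)))) 0.

Definition weakly_increasing_wrt {X : Type} (le : X -> X -> Prop)
    (T S Rm : X -> X) : Prop :=
  forall x,
    (forall y, Rm y = T x -> le (T x) (S y)) /\
    (forall y, Rm y = S x -> le (S x) (T y)).

(* Starting from x_0, pick x_(2k+1) and x_(2k+2) with H x_(2k+1) = f x_(2k) and
   H x_(2k+2) = g x_(2k+1), as (a) allows.  Weak increase makes y_k := H x_(k+1)
   a chain, so any two of its terms are comparable and the contraction condition
   applies to consecutive pairs of opposite parity.  Since beta stays below some
   eta < 1 away from 0, the gaps d(y_k, y_(k+1)) tend to 0 and (y_k) is Cauchy.
   Its limit z satisfies f z = H z = g z by continuity and compatibility, since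
   the f- and H-images of the even-indexed x_k both converge to z, and likewise
   for g on the odd-indexed ones. *)
From Stdlib Require Import Reals Lra Lia Classical ClassicalEpsilon.
Open Scope R_scope.

Lemma even_succ_negb n : Nat.even (S n) = negb (Nat.even n).
Proof. now rewrite Nat.even_succ, Nat.negb_even. Qed.

Lemma class_S_bounded_away (beta : R -> R) : class_S beta ->
  forall a, 0 < a -> exists eta, 0 <= eta < 1 /\ forall t, a <= t -> beta t <= eta.
Proof.
  intros [Hrange Hlim] a Ha.
  apply NNPP; intro Hno.
  assert (Hnear1 : forall k : nat, exists t, a <= t /\ 1 - / INR (S k) < beta t).
  { intro k. apply NNPP; intro Hk. apply Hno. exists (1 - / INR (S k)).
    assert (1 <= INR (S k)) by (rewrite S_INR; pose proof (pos_INR k); lra).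
    assert (0 < / INR (S k)) by (apply Rinv_0_lt_compat; lra).
    assert (/ INR (S k) <= 1) by (rewrite <- Rinv_1; apply Rinv_le_contravar; lra).
    split; [lra|]. intros t Ht. apply Rnot_lt_le. intro. apply Hk. now exists t. }
  set (t := fun k => proj1_sig (constructive_indefinite_description _ (Hnear1 k))).
  assert (Ht : forall k, a <= t k /\ 1 - / INR (S k) < beta (t k))
    by (intro k; exact (proj2_sig (constructive_indefinite_description _ (Hnear1 k)))).
  assert (Hbeta_to_1 : Un_cv (fun k => beta (t k)) 1).
  { intros eps Heps. destruct (archimed_cor1 eps Heps) as [N [HN HN0]].
    exists N. intros n Hn. destruct (Ht n) as [Ha_t Hb_t].
    destruct (Hrange (t n) ltac:(lra)).
    assert (/ INR (S n) <= / INR N)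
      by (apply Rinv_le_contravar; [apply lt_0_INR | apply le_INR]; lia).
    unfold R_dist. rewrite Rabs_left1 by lra. lra. }
  assert (Ht_to_0 : Un_cv t 0) by (apply Hlim; [intro n; destruct (Ht n); lra | exact Hbeta_to_1]).
  destruct (Ht_to_0 a Ha) as [N HN]. specialize (HN N (le_n N)).
  destruct (Ht N) as [Ha_t _]. unfold R_dist in HN. rewrite Rabs_right in HN by lra. lra.
Qed.

Lemma class_S_iterate_lt (beta : R -> R) (D : nat -> R) : class_S beta ->
  (forall n, 0 <= D n) -> (forall n, D (S n) <= beta (D n) * D n) ->
  forall eps, 0 < eps -> exists N, forall n, (n >= N)%nat -> D n < eps.
Proof.
  intros Hbeta Hpos HD eps Heps.
  assert (Hdecr : forall n, D (S n) <= D n).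
  { intro n. destruct (proj1 Hbeta (D n) (Hpos n)). specialize (HD n). specialize (Hpos n). nra. }
  destruct (classic (exists n, D n < eps)) as [[N HN] | Hnone].
  { exists N. intros n Hn. induction Hn as [|n _ IH]; [exact HN|]. specialize (Hdecr n). lra. }
  exfalso.
  assert (Hge : forall n, eps <= D n) by (intro n; apply Rnot_lt_le; intro; apply Hnone; eauto).
  destruct (class_S_bounded_away beta Hbeta eps Heps) as [eta [[Heta0 Heta1] Heta]].
  assert (Hgeom : forall n, D n <= eta ^ n * D 0%nat).
  { induction n as [|n IH]; [simpl; lra|]. simpl.
    specialize (HD n). specialize (Heta _ (Hge n)). specialize (Hpos n).
    assert (beta (D n) * D n <= eta * D n) by (apply Rmult_le_compat_r; auto).
    assert (eta * D n <= eta * (eta ^ n * D 0%nat)) by (apply Rmult_le_compat_l; auto).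
    lra. }
  pose proof (Hpos 0%nat).
  destruct (pow_lt_1_zero eta ltac:(rewrite Rabs_right; lra) (eps / (D 0%nat + 1)))
    as [N HN]; [apply Rdiv_lt_0_compat; lra|].
  specialize (HN N (le_n N)). pose proof (pow_le eta N Heta0).
  rewrite Rabs_right in HN by lra.
  apply (Rmult_lt_compat_r (D 0%nat + 1)) in HN; [|lra].
  unfold Rdiv in HN. rewrite Rmult_assoc, Rinv_l, Rmult_1_r in HN by lra.
  specialize (Hgeom N). specialize (Hge N). nra.
Qed.

Lemma alternating_contraction_cauchy {X : Type} (d : X -> X -> R) (beta : R -> R) (y : nat -> X) :
  is_metric d -> class_S beta ->
  (forall m n, Nat.even m <> Nat.even n ->
     d (y (S m)) (y (S n)) <= beta (d (y m) (y n)) * d (y m) (y n)) ->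
  seq_cauchy d y.
Proof.
  intros [Hpos [_ [Hsym Htri]]] Hbeta Hcontr eps Heps.
  assert (Hpar : forall n, Nat.even n <> Nat.even (S n))
    by (intro n; rewrite even_succ_negb; destruct (Nat.even n); discriminate).
  destruct (class_S_bounded_away beta Hbeta (eps / 2) ltac:(lra)) as [eta [[Heta0 Heta1] Heta]].
  set (delta := (1 - eta) * eps / 8).
  assert (Hdelta : 0 < delta) by (unfold delta; nra).
  assert (Hdelta_le : delta <= eps / 8) by (unfold delta; nra).
  destruct (class_S_iterate_lt beta (fun n => d (y n) (y (S n))) Hbeta
              (fun n => Hpos _ _) (fun n => Hcontr n (S n) (Hpar n)) delta Hdelta) as [N HN].
  (* Opposite parity: d(y m, y n) <= 2 delta + eta d(y m, y n) as soon as d(y m, y n) >= eps/2. *)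
  assert (Hopp : forall m n, (m >= N)%nat -> (n >= N)%nat -> Nat.even m <> Nat.even n ->
     d (y m) (y n) < eps / 2).
  { intros m n Hm Hn Hmn. apply Rnot_le_lt. intro Hbig.
    pose proof (HN m Hm). pose proof (HN n Hn). pose proof (Hcontr m n Hmn).
    pose proof (Heta _ Hbig).
    pose proof (Htri (y m) (y (S m)) (y n)).
    pose proof (Htri (y (S m)) (y (S n)) (y n)).
    rewrite (Hsym (y (S n)) (y n)) in *.
    assert (beta (d (y m) (y n)) * d (y m) (y n) <= eta * d (y m) (y n))
      by (apply Rmult_le_compat_r; auto).
    unfold delta in *. nra. }
  exists N. intros m n Hm Hn.
  destruct (Bool.bool_dec (Nat.even m) (Nat.even n)) as [Hsame | Hdiff].
  - assert (Nat.even m <> Nat.even (S n)) by (rewrite Hsame; apply Hpar).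
    pose proof (Hopp m (S n) Hm ltac:(lia) H). pose proof (HN n Hn).
    pose proof (Htri (y m) (y (S n)) (y n)). rewrite (Hsym (y (S n)) (y n)) in *. lra.
  - pose proof (Hopp m n Hm Hn Hdiff). lra.
Qed.

Lemma seq_conv_subseq {X : Type} (d : X -> X -> R) (y v : nat -> X) (phi : nat -> nat) (z : X) :
  (forall k, (k <= phi k)%nat) -> (forall k, v k = y (phi k)) ->
  seq_conv d y z -> seq_conv d v z.
Proof.
  intros Hphi Hv Hy eps Heps. destruct (Hy eps Heps) as [N HN].
  exists N. intros n Hn. rewrite Hv. apply HN. specialize (Hphi n). lia.
Qed.

(* Compatibility makes d(F (G s_k), G (F s_k)) vanish; continuity sends these terms to F z and G z. *)
Lemma compatible_limit_coincidence {X : Type} (d : X -> X -> R) (F G : X -> X) (s : nat -> X) (z : X) :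
  is_metric d -> continuous_map d F -> continuous_map d G -> compatible d F G ->
  seq_conv d (fun k => F (s k)) z -> seq_conv d (fun k => G (s k)) z -> F z = G z.
Proof.
  intros [Hpos [Hzero [Hsym Htri]]] HF HG HFG HFz HGz.
  specialize (HFG s z HFz HGz).
  apply Hzero. destruct (Hpos (F z) (G z)) as [Hlt | Heq]; [exfalso | auto].
  set (e := d (F z) (G z)) in *.
  destruct (HF z (e / 3) ltac:(lra)) as [dF [HdF HF']].
  destruct (HG z (e / 3) ltac:(lra)) as [dG [HdG HG']].
  destruct (HGz dF HdF) as [N1 HN1]. destruct (HFz dG HdG) as [N2 HN2].
  destruct (HFG (e / 3) ltac:(lra)) as [N3 HN3].
  set (k := (N1 + N2 + N3)%nat).
  specialize (HN1 k ltac:(unfold k; lia)). specialize (HN2 k ltac:(unfold k; lia)).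
  specialize (HN3 k ltac:(unfold k; lia)). unfold R_dist in HN3.
  rewrite Rminus_0_r, Rabs_right in HN3 by (apply Rle_ge, Hpos).
  rewrite Hsym in HN1, HN2. specialize (HF' _ HN1). specialize (HG' _ HN2).
  pose proof (Htri (F z) (F (G (s k))) (G z)).
  pose proof (Htri (F (G (s k))) (G (F (s k))) (G z)) as Htri2.
  rewrite (Hsym (G (F (s k))) (G z)) in Htri2. unfold e in *. lra.
Qed.

Section JungckSequence.

Context {X : Type}.
Variables (le : X -> X -> Prop) (d : X -> X -> R) (f g H pf pg : X -> X) (x0 : X).
Hypothesis Hpf : forall x, H (pf x) = f x.
Hypothesis Hpg : forall x, H (pg x) = g x.

Fixpoint jungck_seq (k : nat) : X :=
  match k with
  | O => x0
  | S k => (if Nat.even k then pf else pg) (jungck_seq k)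
  end.

Definition jungck_image (k : nat) : X := H (jungck_seq (S k)).

Lemma jungck_image_eq k : jungck_image k = (if Nat.even k then f else g) (jungck_seq k).
Proof. unfold jungck_image; simpl. destruct (Nat.even k); auto. Qed.

Lemma jungck_image_even k : jungck_image (2 * k) = f (jungck_seq (2 * k)).
Proof. now rewrite jungck_image_eq, Nat.even_mul. Qed.

Lemma jungck_image_odd k : jungck_image (S (2 * k)) = g (jungck_seq (S (2 * k))).
Proof. now rewrite jungck_image_eq, even_succ_negb, Nat.even_mul. Qed.

Hypothesis Hpo : is_partial_order le.
Hypothesis Hwi : weakly_increasing_wrt le f g H.

Lemma jungck_image_le_succ k : le (jungck_image k) (jungck_image (S k)).
Proof.
  pose proof (jungck_image_eq k) as Hk.
  rewrite Hk, jungck_image_eq, even_succ_negb.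
  unfold jungck_image in Hk. destruct (Hwi (jungck_seq k)) as [Hfg Hgf].
  destruct (Nat.even k); simpl; auto.
Qed.

Lemma jungck_image_monotone m n : (m <= n)%nat -> le (jungck_image m) (jungck_image n).
Proof.
  destruct Hpo as [Hrefl [_ Htrans]].
  induction 1; [apply Hrefl | eapply Htrans; [eassumption | apply jungck_image_le_succ]].
Qed.

Variable beta : R -> R.
Hypothesis Hmetric : is_metric d.
Hypothesis Hcontr : forall x y, (le (H x) (H y) \/ le (H y) (H x)) ->
  d (f x) (g y) <= beta (d (H x) (H y)) * d (H x) (H y).

Lemma jungck_image_contraction m n : Nat.even m <> Nat.even n ->
  d (jungck_image (S m)) (jungck_image (S n))
  <= beta (d (jungck_image m) (jungck_image n)) * d (jungck_image m) (jungck_image n).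
Proof.
  intro Hmn. destruct Hmetric as [_ [_ [Hsym _]]].
  assert (Hcmp : le (jungck_image m) (jungck_image n) \/ le (jungck_image n) (jungck_image m))
    by (destruct (Nat.le_ge_cases m n); [left | right]; apply jungck_image_monotone; auto).
  rewrite !(jungck_image_eq (S _)), !even_succ_negb.
  unfold jungck_image in *.
  destruct (Nat.even m), (Nat.even n); try congruence; simpl.
  - rewrite (Hsym (g _)), (Hsym (H (jungck_seq (S m)))). apply Hcontr. tauto.
  - apply Hcontr. exact Hcmp.
Qed.

Hypotheses (Hf : continuous_map d f) (Hg : continuous_map d g) (HH : continuous_map d H).
Hypotheses (HfH : compatible d f H) (HgH : compatible d g H).

Lemma jungck_limit_coincidence z : seq_conv d jungck_image z -> f z = H z /\ g z = H z.
Proof.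
  intro Hz. split.
  - apply (compatible_limit_coincidence d f H (fun k => jungck_seq (2 * S k)) z); auto.
    + apply (seq_conv_subseq d jungck_image _ (fun k => 2 * S k)%nat z); [intro; lia| |exact Hz].
      intro k. now rewrite jungck_image_even.
    + apply (seq_conv_subseq d jungck_image _ (fun k => S (2 * k)) z); [intro; lia| |exact Hz].
      intro k. unfold jungck_image. f_equal. f_equal. lia.
  - apply (compatible_limit_coincidence d g H (fun k => jungck_seq (S (2 * k))) z); auto.
    + apply (seq_conv_subseq d jungck_image _ (fun k => S (2 * k)) z); [intro; lia| |exact Hz].
      intro k. now rewrite jungck_image_odd.
    + apply (seq_conv_subseq d jungck_image _ (fun k => 2 * k)%nat z); [intro; lia|reflexivity|exact Hz].
Qed.

End JungckSequence.

Lemma range_section {X : Type} (H f : X -> X) :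
  (forall x, exists y, H y = f x) -> exists pf, forall x, H (pf x) = f x.
Proof.
  intro Hf. exists (fun x => proj1_sig (constructive_indefinite_description _ (Hf x))).
  intro x. exact (proj2_sig (constructive_indefinite_description _ (Hf x))).
Qed.

Theorem theorem2p5 (X : Type) (le : X -> X -> Prop) (d : X -> X -> R)
  (f g H : X -> X) (beta : R -> R) :
  inhabited X ->
  is_partial_order le ->
  is_metric d ->
  complete_metric d ->
  (forall x, exists y, H y = f x) ->
  (forall x, exists y, H y = g x) ->
  continuous_map d f -> continuous_map d g -> continuous_map d H ->
  compatible d f H -> compatible d g H ->
  weakly_increasing_wrt le f g H ->
  class_S beta ->
  (forall x y, (le (H x) (H y) \/ le (H y) (H x)) ->
     d (f x) (g y) <= beta (d (H x) (H y)) * d (H x) (H y)) ->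
  exists u, f u = g u /\ g u = H u.
Proof.
  intros [x0] Hpo Hmetric Hcomplete HfH_range HgH_range Hf Hg HH HfH HgH Hwi Hbeta Hcontr.
  destruct (range_section H f HfH_range) as [pf Hpf].
  destruct (range_section H g HgH_range) as [pg Hpg].
  set (y := jungck_image H pf pg x0).
  assert (Hcauchy : seq_cauchy d y).
  { apply (alternating_contraction_cauchy d beta y Hmetric Hbeta).
    exact (jungck_image_contraction le d f g H pf pg x0 Hpf Hpg Hpo Hwi beta Hmetric Hcontr). }
  destruct (Hcomplete y Hcauchy) as [z Hz].
  destruct (jungck_limit_coincidence d f g H pf pg x0 Hpf Hpg Hmetric Hf Hg HH HfH HgH z Hz)
    as [Hfz Hgz].
  exists z. split; congruence.
Qed.
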